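(* Let $(G,d_G)$ be a connected finite metric graph and let $r\in G$. For $\alpha>0$ let $N_E(\alpha)$ denote the number of edges of $G$ of length at most $\alpha$. Then for any $d>0$ and any connected component $B$ of the set $B_{d,\alpha}=\{x\in G: d-\alpha\le d_G(r,x)\le d+\alpha\}$, \[ \operatorname{diam}(B)\le 4\,(2+N_E(4\alpha))\,\alpha, \] where the diameter is taken with respect to $d_G$.
   Context: A finite metric graph is the geometric realization of a finite 1-dimensional simplicial complex in which each edge is identified with a real segment $[a,b]$ (its length being $b-a$), endowed with the unique path metric $d_G$ whose restriction to each edge is the standard metric of the segment. *)

From HB Require Import structures.
From mathcomp Require Import all_boot all_order all_algebra.
From mathcomp Require Import boolp classical_sets reals.
Set Implicit Arguments. Unset Strict Implicit. Unset Printing Implicit Defensive.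
Import Order.TTheory GRing.Theory Num.Theory.
Local Open Scope ring_scope.
Local Open Scope classical_set_scope.

(* A finite metric graph: the geometric realization of a finite 1-dimensional
   simplicial complex (vertices V, edges E, no loops, no multiple edges),
   edge e identified with the segment [0, len e] (src e at 0, dst e at len e). *)
Record mgraph (R : realType) := MGraph {
  V : finType;
  E : finType;
  src : E -> V;
  dst : E -> V;
  len : E -> R;
  len_gt0 : forall e, 0 < len e;
  src_neq_dst : forall e, src e != dst e;
  simple : forall e e', [set src e; dst e]%SET = [set src e'; dst e']%SET -> e = e' }.

Section MG.
Variables (R : realType) (G : mgraph R).

(* Points of the geometric realization, in canonical form:
   a vertex, or an interior gpoint of an edge at parameter t in ]0, len e[. *)
Inductive gpoint := PV of V G | PE of E G & R.

Definition inG (x : gpoint) : Prop :=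
  match x with PV _ => True | PE e t => 0 < t < len e end.

Definition step_start (s : E G * bool) := if s.2 then src s.1 else dst s.1.
Definition step_end (s : E G * bool) := if s.2 then dst s.1 else src s.1.

Fixpoint walk (u v : V G) (p : seq (E G * bool)) : bool :=
  match p with
  | [::] => u == v
  | s :: p' => (step_start s == u) && walk (step_end s) v p'
  end.

Definition weight (p : seq (E G * bool)) : R := \sum_(s <- p) len s.1.

Definition dV (u v : V G) : R :=
  inf [set w | exists p, walk u v p /\ w = weight p].

Definition graph_connected : Prop := forall u v : V G, exists p, walk u v p.

(* The path metric d_G on the realization (shortest-path metric). *)
Definition dist (x y : gpoint) : R :=
  match x, y with
  | PV u, PV v => dV u v
  | PV u, PE e t => Num.min (dV u (src e) + t) (dV u (dst e) + (len e - t))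
  | PE e t, PV v => Num.min (t + dV (src e) v) ((len e - t) + dV (dst e) v)
  | PE e t, PE e' t' =>
      let via := Num.min
        (Num.min (t + dV (src e) (src e') + t')
                 (t + dV (src e) (dst e') + (len e' - t')))
        (Num.min ((len e - t) + dV (dst e) (src e') + t')
                 ((len e - t) + dV (dst e) (dst e') + (len e' - t'))) in
      if e == e' then Num.min `|t - t'| via else via
  end.

Definition gopen (U : set gpoint) : Prop :=
  forall x, inG x -> U x ->
    exists2 eps : R, 0 < eps & forall y, inG y -> dist x y < eps -> U y.

Definition gconnected (A : set gpoint) : Prop :=
  forall U W : set gpoint, gopen U -> gopen W ->
    A `<=` U `|` W -> A `&` U `&` W = set0 -> A `<=` U \/ A `<=` W.

Definition is_component (S B : set gpoint) : Prop :=
  [/\ B `<=` S, B !=set0, gconnected B &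
      forall C, B `<=` C -> C `<=` S -> gconnected C -> C = B].

Definition NE (a : R) : nat := #|[set e : E G | len e <= a]%SET|.

Definition annulus (r : gpoint) (d alpha : R) : set gpoint :=
  [set x | inG x /\ d - alpha <= dist r x <= d + alpha].

End MG.

From HB Require Import structures.
From mathcomp Require Import all_boot all_order all_algebra.
From mathcomp Require Import boolp classical_sets reals.
From mathcomp Require Import lra.
Set Implicit Arguments. Unset Strict Implicit. Unset Printing Implicit Defensive.
Import Order.TTheory GRing.Theory Num.Theory.
Local Open Scope ring_scope.
Local Open Scope classical_set_scope.

(* Along an edge the distance to [r] is piecewise linear with slopes [+-1],
   and its only local minimum is at [r] itself; hence every subsegment of an
   edge lying in the annulus [d - alpha <= d_G(r, .) <= d + alpha] has length
   at most [4 * alpha], and two close enough points of the annulus on a common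
   edge are joined by such a subsegment.  So the points of the annulus reached
   from a fixed [x] by chains of these subsegments form, together with the
   points outside the annulus, an open set whose complement is open too: a
   component [B] containing [x] is thus made of reachable points.  A chain
   either stays in one edge, or runs along part of an edge to a vertex,
   through a walk of edges contained in the annulus, and along part of an edge
   again.  The walk can be taken without repeated edges, each of length at
   most [4 * alpha], whence
   [d_G(x, y) <= 4 * alpha + 4 * alpha * N_E(4 * alpha) + 4 * alpha]. *)

Lemma minr_cases {R : realDomainType} (x y : R) :
  (Num.min x y = x /\ x <= y) \/ (Num.min x y = y /\ y <= x).
Proof. by case: (leP x y) => h; [left|right]; split => //; exact: ltW. Qed.

Lemma maxr_cases {R : realDomainType} (x y : R) :
  (Num.max x y = y /\ x <= y) \/ (Num.max x y = x /\ y <= x).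
Proof. by case: (leP x y) => h; [left|right]; split => //; exact: ltW. Qed.

Lemma normr_cases {R : realDomainType} (x : R) :
  (`|x| = x /\ 0 <= x) \/ (`|x| = - x /\ x <= 0).
Proof.
case: (lerP 0 x) => h; [left|right]; split => //; last exact: ltW.
  by rewrite ger0_norm.
by rewrite ltr0_norm.
Qed.

(* Replaces every [Num.min]/[Num.max] of the goal by a fresh variable together
   with its two defining cases, so that [lra] can finish. *)
Ltac case_minmax := repeat match goal with
  | |- context [Num.min ?a ?b] =>
      let m := fresh "m" in have := minr_cases a b; set m := Num.min a b; clearbody m
  | |- context [Num.max ?a ?b] =>
      let m := fresh "m" in have := maxr_cases a b; set m := Num.max a b; clearbody m
  end.

Section EdgeProfile.
Variable R : realType.
Implicit Types (L a b s u v lo hi eps : R).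

(* The distance from a base point to the point at parameter [s] of an edge of
   length [L] whose endpoints lie at distances [a] and [b]; [t0] is the
   parameter of the base point when it lies on the edge, and otherwise a
   nonpositive dummy that makes the first term redundant. *)
Definition edge_profile L t0 a b s : R :=
  Num.min `|s - t0| (Num.min (s + a) (L - s + b)).

Lemma edge_profile_le_dist L t0 a b s : edge_profile L t0 a b s <= `|s - t0|.
Proof. by rewrite /edge_profile ge_min lexx. Qed.

Lemma edge_profile_cases L t0 a b s :
  edge_profile L t0 a b s = `|s - t0| \/ edge_profile L t0 a b s = s + a \/
  edge_profile L t0 a b s = L - s + b.
Proof.
rewrite /edge_profile; case: (minr_cases (s + a) (L - s + b)) => -[-> _].
  by case: (minr_cases `|s - t0| (s + a)) => -[-> _]; tauto.
by case: (minr_cases `|s - t0| (L - s + b)) => -[-> _]; tauto.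
Qed.

Lemma edge_profile_lipschitz L t0 a b s s' :
  edge_profile L t0 a b s' <= edge_profile L t0 a b s + `|s - s'|.
Proof.
have [h1 h2 h3] : [/\ edge_profile L t0 a b s' <= `|s' - t0|,
    edge_profile L t0 a b s' <= s' + a & edge_profile L t0 a b s' <= L - s' + b].
  by split; rewrite /edge_profile !ge_min lexx ?orbT.
have h4 : `|s' - t0| <= `|s - t0| + `|s - s'|.
  by rewrite (_ : s' - t0 = (s - t0) - (s - s')) ?ler_normB //; lra.
have := ler_norml (s - s') `|s - s'|; rewrite lexx => /esym/andP[h5 h6].
by case: (edge_profile_cases L t0 a b s) => [->|[->|->]]; lra.
Qed.

Lemma exists_pos_gap (xs : seq R) :
  exists2 e, 0 < e & forall x, x \in xs -> x <= 0 \/ e <= x.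
Proof.
elim: xs => [|y xs [e he H]]; first by exists 1.
case: (lerP y 0) => hy.
  by exists e => // x; rewrite inE => /orP[/eqP->|/H]; [left|].
exists (Num.min y e); first by rewrite lt_min hy he.
move=> x; rewrite inE => /orP[/eqP->|/H[]]; [by right; rewrite ge_min lexx|by left|].
by move=> h; right; rewrite ge_min h orbT.
Qed.

(* The profile can exceed [hi] strictly inside [u, v] only around one of its
   local maxima, of heights [(L + a + b) / 2], [(t0 + a) / 2] and
   [(L + b - t0) / 2]; having slopes [+-1], it does so on an interval of width
   twice the excess. *)
Lemma edge_profile_le_between L t0 a b hi eps u v s :
  0 < eps ->
  ((L + a + b) / 2 - hi <= 0 \/ eps <= (L + a + b) / 2 - hi) ->
  ((t0 + a) / 2 - hi <= 0 \/ eps <= (t0 + a) / 2 - hi) ->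
  ((L + b - t0) / 2 - hi <= 0 \/ eps <= (L + b - t0) / 2 - hi) ->
  u <= s <= v -> v - u < eps ->
  edge_profile L t0 a b u <= hi -> edge_profile L t0 a b v <= hi ->
  edge_profile L t0 a b s <= hi.
Proof.
move=> He H1 H2 H3 /andP[Hus Hsv] Huv Hu Hv; rewrite leNgt; apply/negP.
rewrite /edge_profile !lt_min !ltr_normr => /andP[/orP Hs1 /andP[Hs2 Hs3]].
move: Hu Hv; rewrite /edge_profile !ge_min !ler_norml.
move=> /orP[/andP[Hu1 Hu2]|/orP[Hu|Hu]] /orP[/andP[Hv1 Hv2]|/orP[Hv|Hv]];
  case: Hs1 => Hs1; lra.
Qed.

(* Similarly the profile can drop below [lo] only around its zero [t0]. *)
Lemma edge_profile_ge_between L t0 a b lo eps u v s :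
  0 < eps -> (lo <= 0 \/ eps <= lo) ->
  u <= s <= v -> v - u < eps ->
  lo <= edge_profile L t0 a b u -> lo <= edge_profile L t0 a b v ->
  lo <= edge_profile L t0 a b s.
Proof.
move=> He H1 /andP[Hus Hsv] Huv; rewrite /edge_profile !le_min !ler_normr.
move=> /andP[/orP Hu1 /andP[Hu2 Hu3]] /andP[/orP Hv1 /andP[Hv2 Hv3]].
apply/and3P; split; [|lra|lra].
case: H1 => H1; first by have := normr_ge0 (s - t0); lra.
by apply/orP; case: Hu1 => Hu1; case: Hv1 => Hv1; lra.
Qed.

Lemma edge_profile_band_local L t0 a b lo hi : exists2 eps, 0 < eps &
  forall u v s, u <= s <= v -> v - u < eps ->
    lo <= edge_profile L t0 a b u <= hi -> lo <= edge_profile L t0 a b v <= hi ->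
    lo <= edge_profile L t0 a b s <= hi.
Proof.
have [e he H] := exists_pos_gap [:: (L + a + b) / 2 - hi; (t0 + a) / 2 - hi;
   (L + b - t0) / 2 - hi; lo].
exists e => // u v s Hs Huv /andP[Hu1 Hu2] /andP[Hv1 Hv2]; apply/andP; split.
  by apply: (edge_profile_ge_between he _ Hs Huv) => //; apply: H; rewrite !inE eqxx !orbT.
by apply: (edge_profile_le_between he _ _ _ Hs Huv) => //; apply: H; rewrite !inE eqxx ?orbT.
Qed.

Lemma tent_band_width (c K lo hi u v : R) : u <= v ->
  (forall s, u <= s <= v -> lo <= Num.min (s + c) (K - s) <= hi) ->
  v - u <= 2 * (hi - lo).
Proof.
move=> huv H.
have /andP[Hu1 Hu2] : lo <= Num.min (u + c) (K - u) <= hi by apply: H; rewrite lexx huv.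
have /andP[Hv1 Hv2] : lo <= Num.min (v + c) (K - v) <= hi by apply: H; rewrite lexx huv.
move: Hu1 Hu2 Hv1 Hv2; rewrite !le_min !ge_min.
move=> /andP[Hu1 Hu3] /orP Hu2 /andP[Hv1 Hv3] /orP Hv2.
case: (lerP ((K - c) / 2) u) => hp1; first by case: Hu2; case: Hv2; lra.
case: (lerP v ((K - c) / 2)) => hp2; first by case: Hu2; case: Hv2; lra.
have /andP[_] : lo <= Num.min ((K - c) / 2 + c) (K - (K - c) / 2) <= hi.
  by apply: H; rewrite (ltW hp1) (ltW hp2).
by rewrite ge_min => /orP[]; lra.
Qed.

Lemma edge_profile_right L t0 a b s : t0 <= s ->
  edge_profile L t0 a b s = Num.min (s + Num.min (- t0) a) (L + b - s).
Proof. by move=> hs; rewrite /edge_profile ger0_norm ?subr_ge0 //; case_minmax; lra. Qed.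

Lemma edge_profile_left L t0 a b s : s <= t0 ->
  edge_profile L t0 a b s = Num.min (s + a) (Num.min t0 (L + b) - s).
Proof. by move=> hs; rewrite /edge_profile ler0_norm ?subr_le0 //; case_minmax; lra. Qed.

(* The profile vanishes at [t0], so [lo <= 0], while at distance
   [(v - u) / 2] from [t0] it would exceed [2 * alpha]. *)
Lemma edge_profile_band_width_across L t0 a b lo alpha u v :
  0 <= a -> 0 <= b -> Num.min t0 (L - t0) <= a -> Num.min t0 (L - t0) <= b ->
  0 < alpha -> - alpha < lo -> 0 <= u -> u < t0 -> t0 < v -> v <= L ->
  (forall s, u <= s <= v -> lo <= edge_profile L t0 a b s <= lo + 2 * alpha) ->
  v - u <= 4 * alpha.
Proof.
move=> ha hb hma hmb hal hlo hu hA hB hvL H.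
have /andP[H0 _] := H t0 ltac:(by rewrite (ltW hA) (ltW hB)).
have hlo0 : lo <= 0.
  by have := edge_profile_le_dist L t0 a b t0; rewrite subrr normr0; lra.
rewrite leNgt; apply/negP => hl.
have [x hx] : exists x, x = (v - u) / 2 by eexists.
case: (lerP (t0 + x) v) => hq.
  have /andP[_] := H (t0 + x) ltac:(by apply/andP; split; lra).
  rewrite /edge_profile !ge_min addrAC subrr add0r ger0_norm; last lra.
  by move: hmb; rewrite ge_min => /orP hmb /orP[?|/orP[?|?]]; case: hmb => ?; lra.
have /andP[_] := H (t0 - x) ltac:(by apply/andP; split; lra).
rewrite /edge_profile !ge_min addrAC subrr add0r normrN ger0_norm; last lra.
by move: hma; rewrite ge_min => /orP hma /orP[?|/orP[?|?]]; case: hma => ?; lra.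
Qed.

(* The hypotheses on [a] and [b] hold for genuine distances, by the triangle
   inequality through the endpoints of the edge. *)
Lemma edge_profile_band_width L t0 a b lo alpha u v :
  0 <= a -> 0 <= b -> Num.min t0 (L - t0) <= a -> Num.min t0 (L - t0) <= b ->
  0 < alpha -> - alpha < lo -> 0 <= u -> u <= v -> v <= L ->
  (forall s, u <= s <= v -> lo <= edge_profile L t0 a b s <= lo + 2 * alpha) ->
  v - u <= 4 * alpha.
Proof.
move=> ha hb hma hmb hal hlo hu huv hvL H.
have width : v - u <= 2 * (lo + 2 * alpha - lo) -> v - u <= 4 * alpha by lra.
case: (lerP t0 u) => hA.
  apply/width/(@tent_band_width (Num.min (- t0) a) (L + b) _ _ _ _ huv) => s hs.
  by rewrite -edge_profile_right ?H //; case/andP: hs; lra.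
case: (lerP v t0) => hB.
  apply/width/(@tent_band_width a (Num.min t0 (L + b)) _ _ _ _ huv) => s hs.
  by rewrite -edge_profile_left ?H //; case/andP: hs; lra.
exact: (edge_profile_band_width_across ha hb hma hmb hal hlo hu hA hB hvL H).
Qed.

End EdgeProfile.

Lemma segment_cases {R : realDomainType} (L t : R) : 0 <= t <= L ->
  t = 0 \/ t = L \/ 0 < t < L.
Proof.
move=> /andP[h1 h2]; case: (eqVneq t 0) => [->|h0]; first by left.
case: (eqVneq t L) => [->|hL]; first by right; left.
by right; right; rewrite lt0r h0 h1 /= lt_neqAle hL h2.
Qed.

Lemma min4_factor {R : realDomainType} (p q r w s k : R) :
  Num.min (Num.min (p + s) (q + k)) (Num.min (r + s) (w + k)) =
  Num.min (s + Num.min p r) (k + Num.min q w).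
Proof. by case_minmax; lra. Qed.

Section PathMetric.
Variables (R : realType) (G : mgraph R).
Hypothesis Gconn : graph_connected G.
Implicit Types (s : E G * bool) (p q : seq (E G * bool)) (u v w : V G) (e : E G).

Lemma weight_cons s p : weight (s :: p) = len s.1 + weight p.
Proof. by rewrite /weight big_cons. Qed.

Lemma weight_cat p q : weight (p ++ q) = weight p + weight q.
Proof. by rewrite /weight big_cat. Qed.

Lemma weight_ge0 p : 0 <= weight p.
Proof. by rewrite /weight sumr_ge0 // => s _; exact/ltW/len_gt0. Qed.

Lemma walk_cat u v w p q : walk u v p -> walk v w q -> walk u w (p ++ q).
Proof.
elim: p u => [|s p IH] u /=; first by move/eqP->.
by case/andP=> -> Hp Hq; rewrite /= (IH _ Hp Hq).
Qed.

Let walk_weights u v := [set x : R | exists p, walk u v p /\ x = weight p].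

Let walk_weights_neq0 u v : walk_weights u v !=set0.
Proof. by have [p Hp] := Gconn u v; exists (weight p), p. Qed.

Let walk_weights_ge0 u v : lbound (walk_weights u v) 0.
Proof. by move=> x [p [_ ->]]; exact: weight_ge0. Qed.

Lemma dV_ge0 u v : 0 <= dV u v.
Proof. by apply: lb_le_inf; [exact: walk_weights_neq0|exact: walk_weights_ge0]. Qed.

Lemma dV_le_weight u v p : walk u v p -> dV u v <= weight p.
Proof.
move=> Hp; apply: (ge_inf (E := walk_weights u v)); last by exists p.
by exists 0; exact: walk_weights_ge0.
Qed.

Lemma dV_ge u v x : (forall p, walk u v p -> x <= weight p) -> x <= dV u v.
Proof.
move=> H; apply: lb_le_inf; first exact: walk_weights_neq0.
by move=> _ [p [Hp ->]]; exact: H.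
Qed.

Lemma dVvv u : dV u u = 0.
Proof.
apply/eqP; rewrite eq_le dV_ge0 andbT.
by have := @dV_le_weight u u [::] (eqxx u); rewrite /weight big_nil.
Qed.

Lemma dV_edge e b : dV (step_start (e, b)) (step_end (e, b)) <= len e.
Proof.
have := @dV_le_weight _ _ [:: (e, b)]; rewrite weight_cons /weight big_nil addr0.
by apply; rewrite /= !eqxx.
Qed.

Lemma dV_src_dst e : dV (src e) (dst e) <= len e.
Proof. exact: (dV_edge e true). Qed.

Lemma dV_dst_src e : dV (dst e) (src e) <= len e.
Proof. exact: (dV_edge e false). Qed.

Lemma dV_triangle u v w : dV u w <= dV u v + dV v w.
Proof.
suff : dV u w - dV u v <= dV v w by lra.
apply: dV_ge => q Hq; suff : dV u w - weight q <= dV u v by lra.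
apply: dV_ge => p Hp; rewrite lerBlDr -weight_cat.
exact/dV_le_weight/(walk_cat Hp Hq).
Qed.

Lemma dV_start_endpoint s z : z = src s.1 \/ z = dst s.1 ->
  dV (step_start s) z <= len s.1.
Proof.
have L0 := ltW (len_gt0 s.1).
by case: s L0 => e [] /= L0 [->|->]; rewrite /step_start /= ?dVvv ?dV_src_dst ?dV_dst_src.
Qed.

Definition min_len : R := \big[Num.min/1]_(e : E G) len e.

Lemma min_len_gt0 : 0 < min_len.
Proof.
rewrite /min_len; elim/big_ind: _ => // [x y hx hy|e _]; first by rewrite lt_min hx hy.
exact: len_gt0.
Qed.

Lemma min_len_le e : min_len <= len e.
Proof. by rewrite /min_len (bigD1 e) //= ge_min lexx. Qed.

Lemma dV_lt_min_len u v : dV u v < min_len -> u = v.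
Proof.
move=> h; apply/eqP; apply: contraLR h => /negbTE huv; rewrite -leNgt.
apply: dV_ge => -[|s p] /=; first by rewrite huv.
case/andP=> _ _; rewrite weight_cons.
by have := min_len_le s.1; have := weight_ge0 p; lra.
Qed.

(* Cutting a walk at its last use of [e] leaves a walk avoiding [e] that starts
   at an endpoint of [e]. *)
Lemma walk_suffix_avoiding (F : {set E G}) e u v p : walk u v p ->
  (forall s, s \in p -> s.1 \in F) ->
  (forall s, s \in p -> s.1 \in F :\ e) \/
  exists z q, [/\ z = src e \/ z = dst e, walk z v q &
                  forall s, s \in q -> s.1 \in F :\ e].
Proof.
elim: p u => [|s p IH] u /=; first by left.
move=> /andP[_ Hw] HF.
have HF' : forall s', s' \in p -> s'.1 \in F by move=> s' hs; apply: HF; rewrite inE hs orbT.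
case: (IH _ Hw HF') => [Hp|]; last by right.
case: (eqVneq s.1 e) => [Es|Ns].
  right; exists (step_end s), p; split => //.
  by rewrite /step_end -Es; case: s.2; [right|left].
left => s'; rewrite inE => /orP[/eqP ->|/Hp //].
by rewrite in_setD1 Ns HF // inE eqxx.
Qed.

Lemma dV_le_card (K : R) (F : {set E G}) u v p : 0 <= K ->
  (forall e, e \in F -> len e <= K) ->
  walk u v p -> (forall s, s \in p -> s.1 \in F) -> dV u v <= K * #|F|%:R.
Proof.
move=> hK; have [n hn] : exists n, #|F| = n by eexists.
rewrite hn; elim: n F u p hn => [|n IH] F u [|s p] hF HK.
- by move=> /= /eqP -> _; rewrite dVvv mulr0.
- by move=> _ /(_ s (mem_head _ _)); rewrite (cards0_eq hF) inE.
- by move=> /= /eqP -> _; rewrite dVvv mulr_ge0.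
move=> Hw HF; have hs : s.1 \in F by apply: HF; rewrite inE eqxx.
have [Hav|[z [q [Hz Hq HqF]]]] := walk_suffix_avoiding s.1 Hw HF.
  by have := Hav s (mem_head _ _); rewrite in_setD1 eqxx.
have hF' : #|F :\ s.1| = n by have := cardsD1 s.1 F; rewrite hs hF add1n => -[].
have HK' e : e \in F :\ s.1 -> len e <= K by rewrite in_setD1 => /andP[_ /HK].
have H1 := IH _ _ _ hF' HK' Hq HqF.
have H2 : dV u z <= K.
  by apply: le_trans (HK _ hs); case/andP: Hw => /eqP <- _; exact: dV_start_endpoint.
by have := dV_triangle u z v; rewrite mulrSr mulrDr mulr1; lra.
Qed.

Definition edge_point e (t : R) : gpoint G :=
  if t == 0 then PV (src e) else if t == len e then PV (dst e) else PE e t.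

Lemma edge_point0 e : edge_point e 0 = PV (src e).
Proof. by rewrite /edge_point eqxx. Qed.

Lemma edge_point_len e : edge_point e (len e) = PV (dst e).
Proof. by rewrite /edge_point eqxx (negbTE (lt0r_neq0 (len_gt0 e))). Qed.

Lemma edge_point_interior e t : 0 < t < len e -> edge_point e t = PE e t.
Proof. by case/andP=> h1 h2; rewrite /edge_point gt_eqF // lt_eqF. Qed.

Lemma inG_edge_point e t : 0 <= t <= len e -> inG (edge_point e t).
Proof.
move=> /segment_cases[->|[->|ht]]; rewrite ?edge_point0 ?edge_point_len //.
by rewrite edge_point_interior.
Qed.

Lemma edge_point_eq_vertex e t v : 0 <= t <= len e -> edge_point e t = PV v ->
  (t = 0 /\ v = src e) \/ (t = len e /\ v = dst e).
Proof.
move=> /segment_cases[->|[->|ht]];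
  rewrite ?edge_point0 ?edge_point_len ?edge_point_interior // => -[->]; tauto.
Qed.

Lemma edge_point_eq_interior e t e' t' : 0 <= t <= len e ->
  edge_point e t = PE e' t' -> [/\ e' = e, t' = t & 0 < t < len e].
Proof.
move=> /segment_cases[->|[->|ht]];
  rewrite ?edge_point0 ?edge_point_len ?edge_point_interior // => -[<- <-].
by split.
Qed.

Lemma dist_vertex_ge0 (r : gpoint G) v : inG r -> 0 <= dist r (PV v).
Proof.
case: r => [u|e t] /= hr; first exact: dV_ge0.
have := dV_ge0 (src e) v; have := dV_ge0 (dst e) v.
by case/andP: hr; case_minmax; lra.
Qed.

Definition is_edge_profile (r : gpoint G) e (t0 : R) := [/\ t0 <= len e,
  Num.min t0 (len e - t0) <= dist r (PV (src e)),
  Num.min t0 (len e - t0) <= dist r (PV (dst e)) &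
  forall t, 0 <= t <= len e -> dist r (edge_point e t) =
    edge_profile (len e) t0 (dist r (PV (src e))) (dist r (PV (dst e))) t].

Lemma vertex_edge_profile u e : is_edge_profile (PV u) e (- dV u (src e)).
Proof.
have := dV_ge0 u (src e); have := dV_ge0 u (dst e).
have := dV_triangle u (dst e) (src e); have := dV_triangle u (src e) (dst e).
have := dV_src_dst e; have := dV_dst_src e; have := len_gt0 e.
move=> *; split => /=; try by case_minmax; lra.
move=> t ht; have /andP[t1 t2] := ht.
case: (segment_cases ht) => [->|[->|hi]];
  rewrite ?edge_point0 ?edge_point_len ?edge_point_interior //= /edge_profile;
  by rewrite opprK ger0_norm; [case_minmax; lra|lra].
Qed.

Lemma same_edge_profile e t0 : 0 < t0 < len e -> is_edge_profile (PE e t0) e t0.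
Proof.
move=> /andP[ht1 ht2].
have := dV_ge0 (src e) (dst e); have := dV_ge0 (dst e) (src e).
have := dV_src_dst e; have := dV_dst_src e; rewrite /is_edge_profile /= !dVvv.
move=> *; split; try by case_minmax; lra.
move=> t /segment_cases[->|[->|ht]];
  rewrite ?edge_point0 ?edge_point_len ?edge_point_interior //= /edge_profile !dVvv.
- by rewrite sub0r normrN ger0_norm; [case_minmax; lra|lra].
- by rewrite ger0_norm; [case_minmax; lra|lra].
- by rewrite eqxx min4_factor distrC.
Qed.

Lemma other_edge_profile e0 t0 e : 0 < t0 < len e0 -> e0 != e ->
  is_edge_profile (PE e0 t0) e (- dist (PE e0 t0) (PV (src e))).
Proof.
move=> /andP[ht1 ht2] ne.
have := dV_ge0 (src e0) (src e); have := dV_ge0 (src e0) (dst e).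
have := dV_ge0 (dst e0) (src e); have := dV_ge0 (dst e0) (dst e).
have := dV_triangle (src e0) (dst e) (src e).
have := dV_triangle (src e0) (src e) (dst e).
have := dV_triangle (dst e0) (dst e) (src e).
have := dV_triangle (dst e0) (src e) (dst e).
have := dV_src_dst e; have := dV_dst_src e; have := len_gt0 e.
move=> *; split => /=; try by case_minmax; lra.
move=> t ht; have /andP[t1 t2] := ht.
case: (segment_cases ht) => [->|[->|hi]];
  rewrite ?edge_point0 ?edge_point_len ?edge_point_interior //= /edge_profile;
  by rewrite ?(negbTE ne) ?min4_factor opprK ger0_norm; case_minmax; lra.
Qed.

Lemma exists_edge_profile (r : gpoint G) e : inG r -> exists t0, is_edge_profile r e t0.
Proof.
case: r => [u|e0 t0] hr; first by eexists; exact: vertex_edge_profile.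
case: (eqVneq e0 e) => [<-|ne]; eexists; first exact: same_edge_profile.
exact: other_edge_profile.
Qed.

Definition edge_close (del : R) (w y : gpoint G) := exists e t t',
  [/\ 0 <= t <= len e, 0 <= t' <= len e, w = edge_point e t, y = edge_point e t' &
      `|t - t'| < del].

Lemma near_vertex v del : 0 < del -> exists2 eps, 0 < eps &
  forall y, inG y -> dist (PV v) y < eps -> y = PV v \/ edge_close del (PV v) y.
Proof.
move=> hdel; exists (Num.min min_len del); first by rewrite lt_min min_len_gt0.
case=> [v'|e t] /= hy hd.
  left; have hv : dV v v' < min_len by move: hd; case_minmax; lra.
  by rewrite (dV_lt_min_len hv).
have L0 := len_gt0 e; have /andP[hy1 hy2] := hy; right.
have X1 := dV_ge0 v (src e); have X2 := dV_ge0 v (dst e).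
have [hs|hs] : dV v (src e) + t < Num.min min_len del \/
               dV v (dst e) + (len e - t) < Num.min min_len del.
  by move: hd; case_minmax; lra.
- have hv : dV v (src e) < min_len by move: hs; case_minmax; lra.
  rewrite (dV_lt_min_len hv) -(edge_point_interior hy) -edge_point0.
  exists e, 0, t; split => //; rewrite ?lexx ?ltW //.
  by rewrite sub0r normrN ger0_norm ?ltW //; move: hs; case_minmax; lra.
- have hv : dV v (dst e) < min_len by move: hs; case_minmax; lra.
  rewrite (dV_lt_min_len hv) -(edge_point_interior hy) -edge_point_len.
  exists e, (len e), t; split => //; rewrite ?lexx ?ltW //.
  by rewrite ger0_norm ?subr_ge0 ?ltW //; move: hs; case_minmax; lra.
Qed.

Lemma near_interior e t del : 0 < t < len e -> 0 < del -> exists2 eps, 0 < eps &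
  forall y, inG y -> dist (PE e t) y < eps -> edge_close del (PE e t) y.
Proof.
move=> ht hdel; have /andP[ht1 ht2] := ht.
exists (Num.min del (Num.min t (len e - t))); first by rewrite !lt_min hdel ht1 subr_gt0 ht2.
case=> [v|e' t'] /= hy hd.
  have := dV_ge0 (src e) v; have := dV_ge0 (dst e) v.
  by move: hd; case_minmax; lra.
have := dV_ge0 (src e) (src e'); have := dV_ge0 (src e) (dst e').
have := dV_ge0 (dst e) (src e'); have := dV_ge0 (dst e) (dst e').
case: (eqVneq e e') hy hd => [<-|ne] hy hd; last by move: hd; case_minmax; lra.
move=> *; exists e, t, t'; rewrite !edge_point_interior //.
have /andP[hy1 hy2] := hy; split; rewrite ?ltW //.
by move: hd; rewrite ?eqxx; case_minmax; lra.
Qed.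

Lemma near_edge_point (w : gpoint G) del : inG w -> 0 < del -> exists2 eps, 0 < eps &
  forall y, inG y -> dist w y < eps -> y = w \/ edge_close del w y.
Proof.
case: w => [v|e t] /= hw hdel; first exact: near_vertex.
have [eps he H] := near_interior hw hdel.
by exists eps => // y hy hd; right; apply: H.
Qed.

(* [o] is the length of the route from [z] to the vertex [v] along the edge
   carrying [z]. *)
Definition anchor (z : gpoint G) v (o : R) := (z = PV v /\ o = 0) \/
  exists e t, z = PE e t /\ ((v = src e /\ o = t) \/ (v = dst e /\ o = len e - t)).

Lemma dist_anchor z1 z2 v1 v2 o1 o2 : anchor z1 v1 o1 -> anchor z2 v2 o2 ->
  dist z1 z2 <= o1 + dV v1 v2 + o2.
Proof.
case=> [[-> ->]|[e1 [t1 [-> H1]]]] [[-> ->]|[e2 [t2 [-> H2]]]] /=.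
- by rewrite add0r addr0.
- by case: H2 => -[-> ->]; case_minmax; lra.
- by case: H1 => -[-> ->]; case_minmax; lra.
- by case: (e1 == e2); case: H1 => -[-> ->]; case: H2 => -[-> ->]; case_minmax; lra.
Qed.

Lemma anchor_src e t : 0 < t < len e -> anchor (edge_point e t) (src e) t.
Proof. by move=> ht; right; exists e, t; rewrite edge_point_interior //; split; [|left]. Qed.

Lemma anchor_dst e t : 0 < t < len e -> anchor (edge_point e t) (dst e) (len e - t).
Proof. by move=> ht; right; exists e, t; rewrite edge_point_interior //; split; [|right]. Qed.

Lemma dist_edge_point e a b : 0 <= a <= len e -> 0 <= b <= len e ->
  dist (edge_point e a) (edge_point e b) <= `|a - b|.
Proof.
move=> ha hb; have L0 := ltW (len_gt0 e).
have vv v : anchor (PV v) v 0 by left.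
case: (segment_cases ha) => [->|[->|hia]]; case: (segment_cases hb) => [->|[->|hib]];
  rewrite ?edge_point0 ?edge_point_len ?subrr ?normr0.
- by rewrite /= dVvv.
- by rewrite /= sub0r normrN ger0_norm ?dV_src_dst.
- have /andP[hb1 _] := hib; rewrite sub0r normrN ger0_norm; last exact: ltW.
  by have := dist_anchor (vv (src e)) (anchor_src hib); rewrite dVvv; lra.
- by rewrite /= subr0 ger0_norm ?dV_dst_src.
- by rewrite /= dVvv.
- have /andP[_ hb2] := hib; rewrite ger0_norm; last by rewrite subr_ge0 ltW.
  by have := dist_anchor (vv (dst e)) (anchor_dst hib); rewrite dVvv; lra.
- have /andP[ha1 _] := hia; rewrite subr0 ger0_norm; last exact: ltW.
  by have := dist_anchor (anchor_src hia) (vv (src e)); rewrite dVvv; lra.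
- have /andP[_ ha2] := hia; rewrite distrC ger0_norm; last by rewrite subr_ge0 ltW.
  by have := dist_anchor (anchor_dst hia) (vv (dst e)); rewrite dVvv; lra.
- by rewrite !edge_point_interior //= eqxx ge_min lexx.
Qed.

Section Annulus.
Variables (r : gpoint G) (d alpha : R).
Hypotheses (hr : inG r) (hd : 0 < d) (hal : 0 < alpha).

Definition in_band (z : gpoint G) : bool := d - alpha <= dist r z <= d + alpha.

Definition band_seg e (a b : R) :=
  forall t, Num.min a b <= t <= Num.max a b -> in_band (edge_point e t).

Definition band_edge e := band_seg e 0 (len e).

Definition band_step (y z : gpoint G) := exists e a b,
  [/\ 0 <= a <= len e, 0 <= b <= len e, y = edge_point e a, z = edge_point e b &
      band_seg e a b].

Lemma band_seg_sym e a b : band_seg e a b -> band_seg e b a.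
Proof. by move=> H t /andP[h1 h2]; apply/H/andP; move: h1 h2; case_minmax; lra. Qed.

Lemma band_seg_trans e a b c : band_seg e a b -> band_seg e b c -> band_seg e a c.
Proof.
move=> H1 H2 t /andP[h1 h2].
have : (Num.min a b <= t /\ t <= Num.max a b) \/ (Num.min b c <= t /\ t <= Num.max b c).
  by move: h1 h2; case_minmax; lra.
by case=> -[h3 h4]; [apply: H1|apply: H2]; apply/andP.
Qed.

Lemma band_step_sym y z : band_step y z -> band_step z y.
Proof.
by move=> [e [a [b [ha hb -> -> hs]]]]; exists e, b, a; split => //; apply: band_seg_sym.
Qed.

Lemma band_seg_width e a b : 0 <= a <= len e -> 0 <= b <= len e ->
  band_seg e a b -> `|a - b| <= 4 * alpha.
Proof.
move=> /andP[ha1 ha2] /andP[hb1 hb2] H.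
have [t0 [ht0 hm1 hm2 Hp]] := exists_edge_profile e hr.
suff : Num.max a b - Num.min a b <= 4 * alpha.
  by have := normr_cases (a - b); case_minmax; lra.
have hlo : - alpha < d - alpha by have := hd; lra.
have hu : 0 <= Num.min a b by case_minmax; lra.
have huv : Num.min a b <= Num.max a b by case_minmax; lra.
have hvL : Num.max a b <= len e by case_minmax; lra.
apply: (edge_profile_band_width (dist_vertex_ge0 _ hr) (dist_vertex_ge0 _ hr)
  hm1 hm2 hal hlo hu huv hvL).
move=> t ht; have /andP[k1 k2] := H t ht.
have tL : 0 <= t <= len e.
  by case/andP: ht => h1 h2; apply/andP; move: h1 h2; case_minmax; lra.
by move: k1 k2; rewrite Hp // => k1 k2; apply/andP; split; lra.
Qed.

Lemma band_edge_len e : band_edge e -> len e <= 4 * alpha.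
Proof.
move=> H; have L0 := ltW (len_gt0 e).
have h0 : (0 : R) <= 0 <= len e by rewrite lexx L0.
have hL : 0 <= len e <= len e by rewrite lexx L0.
by have := band_seg_width h0 hL H; rewrite sub0r normrN ger0_norm.
Qed.

Definition attached (z : gpoint G) v := z = PV v \/ exists e t,
  [/\ 0 <= t <= len e, z = edge_point e t &
      (v = src e /\ band_seg e 0 t) \/ (v = dst e /\ band_seg e t (len e))].

Definition band_walk u v := exists p, walk u v p /\ forall s, s \in p -> band_edge s.1.

(* The two shapes of a chain of band steps: inside a single edge, or out to a
   vertex, through a walk of band edges, and in from a vertex. *)
Definition band_link (x y : gpoint G) :=
  (exists u v, [/\ attached x u, band_walk u v & attached y v]) \/ band_step x y.

Lemma band_walk_refl u : band_walk u u.
Proof. by exists [::]; split => //=. Qed.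

Lemma band_walk_rcons u e b : band_walk u (step_start (e, b)) -> band_edge e ->
  band_walk u (step_end (e, b)).
Proof.
move=> [p [Hp Hf]] He; exists (p ++ [:: (e, b)]); split.
  by apply: walk_cat Hp _; rewrite /= !eqxx.
by move=> s; rewrite mem_cat inE => /orP[/Hf|/eqP ->].
Qed.

Lemma attached_vertex w v : attached (PV w) v ->
  w = v \/ exists e, band_edge e /\
    ((v = src e /\ w = dst e) \/ (v = dst e /\ w = src e)).
Proof.
case=> [[->]|[e [t [ht E H]]]]; first by left.
case: (edge_point_eq_vertex ht (esym E)) => -[Et Ew]; subst t;
  case: H => -[Ev H]; subst; try by left.
- by right; exists e; split => //; right.
- by right; exists e; split => //; left.
Qed.

Lemma band_walk_attached_vertex u w v :
  band_walk u v -> attached (PV w) v -> band_walk u w.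
Proof.
move=> C /attached_vertex [->//|[e [Hf [[Ev Ew]|[Ev Ew]]]]]; subst.
- exact: (band_walk_rcons (b := true)).
- exact: (band_walk_rcons (b := false)).
Qed.

Lemma attached_interior e t v : 0 < t < len e -> attached (PE e t) v ->
  (v = src e /\ band_seg e 0 t) \/ (v = dst e /\ band_seg e t (len e)).
Proof.
move=> ht [//|[e' [t' [ht' E H]]]].
by case: (edge_point_eq_interior ht' (esym E)) => -> -> _.
Qed.

Lemma band_step_vertex_attached w z : band_step (PV w) z -> attached z w.
Proof.
move=> [e [a [b [ha hb E1 -> hs]]]]; right; exists e, b; split => //.
case: (edge_point_eq_vertex ha (esym E1)) => -[Ea ->]; subst a; first by left.
by right; split => //; apply: band_seg_sym.
Qed.

Lemma band_link_vertex x w : band_link x (PV w) ->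
  exists u, attached x u /\ band_walk u w.
Proof.
case=> [[u [v [Ax C Ay]]]|[e [a [b [ha hb -> Ey hs]]]]].
  by exists u; split => //; exact: (band_walk_attached_vertex C Ay).
exists w; split; last exact: band_walk_refl.
right; exists e, a; split => //.
case: (edge_point_eq_vertex hb (esym Ey)) => -[Eb ->]; subst b; last by right.
by left; split => //; apply: band_seg_sym.
Qed.

Lemma band_link_step x y z : band_link x y -> band_step y z -> band_link x z.
Proof.
move=> HQ HS; have [e [a [b [ha hb Ey Ez hs]]]] := HS.
case: (segment_cases ha) => [Ea|[Ea|hI]].
- rewrite Ey Ea edge_point0 in HQ HS.
  have [u [Ax C]] := band_link_vertex HQ.
  by left; exists u, (src e); split => //; apply: band_step_vertex_attached.
- rewrite Ey Ea edge_point_len in HQ HS.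
  have [u [Ax C]] := band_link_vertex HQ.
  by left; exists u, (dst e); split => //; apply: band_step_vertex_attached.
rewrite Ey edge_point_interior // in HQ.
case: HQ => [[u [v [Ax C Ay]]]|[e1 [a1 [b1 [ha1 hb1 Ex Ey1 hs1]]]]].
  left; exists u, v; split => //; right; exists e, b; split => //.
  case: (attached_interior hI Ay) => -[Ev H]; [left|right]; split => //.
    exact: band_seg_trans H hs.
  exact: band_seg_trans (band_seg_sym hs) H.
case: (edge_point_eq_interior hb1 (esym Ey1)) => E1 E2 _; subst e1 b1.
by right; exists e, a1, b; split => //; apply: band_seg_trans hs1 hs.
Qed.

Inductive band_chain (x : gpoint G) : gpoint G -> Prop :=
  | band_chain0 : band_chain x x
  | band_chainS y z : band_chain x y -> band_step y z -> band_chain x z.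

Lemma band_chain_link x y : inG x -> in_band x -> band_chain x y -> band_link x y.
Proof.
move=> hx hA; elim => [|y' z _ IH HS]; last exact: band_link_step IH HS.
case: x hx hA => [v|e t] /= hx hA.
  by left; exists v, v; split; [left|exact: band_walk_refl|left].
right; exists e, t, t; rewrite edge_point_interior //.
have /andP[h1 h2] := hx; split; rewrite ?ltW //.
move=> t' ht'; have -> : t' = t by move: ht'; case_minmax; lra.
by rewrite edge_point_interior.
Qed.

Lemma dV_band_walk u v : band_walk u v -> dV u v <= 4 * alpha * (NE G (4 * alpha))%:R.
Proof.
move=> [p [Hw Hf]]; have a0 : 0 <= 4 * alpha by have := hal; lra.
set F := [set e | `[< band_edge e >]]%SET.
have HK e : e \in F -> len e <= 4 * alpha by rewrite inE => /asboolP/band_edge_len.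
have HF s : s \in p -> s.1 \in F by move=> hs; rewrite inE; apply/asboolP/Hf.
apply: le_trans (dV_le_card a0 HK Hw HF) _; rewrite ler_wpM2l // ler_nat.
apply/subset_leq_card/fintype.subsetP => e.
by rewrite !inE => /band_edge_len.
Qed.

Lemma band_edge_dV e : band_edge e ->
  dV (src e) (dst e) <= 4 * alpha /\ dV (dst e) (src e) <= 4 * alpha.
Proof.
move=> /band_edge_len he.
by split; [exact: le_trans (dV_src_dst e) he|exact: le_trans (dV_dst_src e) he].
Qed.

Lemma attached_anchor z v : attached z v -> exists w o,
  [/\ anchor z w o, o + dV w v <= 4 * alpha & dV v w + o <= 4 * alpha].
Proof.
have a0 := hal.
case=> [->|[e [t [ht -> H]]]].
  by exists v, 0; rewrite dVvv; split; [left|lra|lra].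
have L0 := len_gt0 e.
case: (segment_cases ht) H => [->|[->|hI]] H.
- rewrite edge_point0; exists (src e), 0; split; [by left| |];
    case: H => -[-> Hs]; rewrite ?dVvv;
    try have [h1 h2] := band_edge_dV Hs; lra.
- rewrite edge_point_len; exists (dst e), 0; split; [by left| |];
    case: H => -[-> Hs]; rewrite ?dVvv;
    try have [h1 h2] := band_edge_dV Hs; lra.
have h0 : (0 : R) <= 0 <= len e by rewrite lexx ltW.
have hL : 0 <= len e <= len e by rewrite lexx ltW.
have /andP[t1 t2] := hI.
case: H => -[-> Hs].
  have := band_seg_width h0 ht Hs; rewrite sub0r normrN ger0_norm => [w|]; last exact: ltW.
  by exists (src e), t; rewrite dVvv; split; [exact: anchor_src|lra|lra].
have := band_seg_width ht hL Hs; rewrite distrC ger0_norm => [w|]; last by rewrite subr_ge0 ltW.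
by exists (dst e), (len e - t); rewrite dVvv; split; [exact: anchor_dst|lra|lra].
Qed.

Lemma band_link_dist x y : band_link x y ->
  dist x y <= 4 * (2 + (NE G (4 * alpha))%:R) * alpha.
Proof.
have a0 := hal; have hN : 0 <= alpha * (NE G (4 * alpha))%:R.
  by apply: mulr_ge0; [exact: ltW|exact: ler0n].
case=> [[u [v [Ax C Ay]]]|[e [a [b [ha hb -> -> hs]]]]].
  have [wx [ox [hx1 hx2 _]]] := attached_anchor Ax.
  have [wy [oy [hy1 _ hy2]]] := attached_anchor Ay.
  have := dist_anchor hx1 hy1; have := dV_triangle wx u wy.
  have := dV_triangle u v wy; have := dV_band_walk C; rewrite -mulrA; lra.
by have := dist_edge_point ha hb; have := band_seg_width ha hb hs; lra.
Qed.

Definition band_seg_radius e (eps : R) := forall a b,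
  0 <= a <= len e -> 0 <= b <= len e ->
  in_band (edge_point e a) -> in_band (edge_point e b) -> `|a - b| < eps ->
  band_seg e a b.

Lemma band_seg_local_edge e : exists2 eps, 0 < eps & band_seg_radius e eps.
Proof.
have [t0 [_ _ _ Hp]] := exists_edge_profile e hr.
have [eps he H] := edge_profile_band_local (len e) t0 (dist r (PV (src e)))
  (dist r (PV (dst e))) (d - alpha) (d + alpha).
exists eps => // a b; wlog ab : a b / a <= b.
  move=> W ha hb hA hB hab; case: (leP a b) => [|/ltW] ba; first exact: W.
  by apply/band_seg_sym/W => //; rewrite distrC.
move=> ha hb hA hB hab t /andP[t1 t2].
have tI : a <= t <= b by apply/andP; move: t1 t2; case_minmax; lra.
have tL : 0 <= t <= len e.
  by case/andP: ha; case/andP: hb; case/andP: tI => *; apply/andP; lra.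
rewrite /in_band Hp //; apply: (H a b t tI); rewrite -?Hp //.
by move: hab; rewrite distrC ger0_norm // subr_ge0.
Qed.

Lemma band_seg_local : exists2 eps, 0 < eps & forall e, band_seg_radius e eps.
Proof.
have H e : exists eps, 0 < eps /\ band_seg_radius e eps.
  by have [eps ? ?] := band_seg_local_edge e; exists eps.
have [f hf] := choice H.
exists (\big[Num.min/1]_e f e).
  elim/big_ind: _ => // [x y hx hy|e _]; [by rewrite lt_min hx hy|exact: (hf e).1].
move=> e a b ha hb hA hB hab; apply: (hf e).2 => //; apply: lt_le_trans hab _.
by rewrite (bigD1 e) //= ge_min lexx.
Qed.

Lemma band_locally z : inG z -> in_band z -> exists2 eps, 0 < eps &
  forall y, inG y -> in_band y -> dist z y < eps -> y = z \/ band_step z y.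
Proof.
move=> hw hA; have [del hdel Hs] := band_seg_local.
have [eps he H] := near_edge_point hw hdel.
exists eps => // y hy hyA hwy.
case: (H y hy hwy) => [->|[e [t [t' [ht ht' Ew Ey hlt]]]]]; first by left.
by right; exists e, t, t'; split => //; apply: Hs; rewrite -?Ew -?Ey.
Qed.

Lemma out_band_locally z : inG z -> ~~ in_band z -> exists2 eps, 0 < eps &
  forall y, inG y -> dist z y < eps -> ~~ in_band y.
Proof.
move=> hw; rewrite /in_band negb_and -!ltNge => /orP hA.
have [del hdel gap] : exists2 del, 0 < del &
    forall y, `|dist r z - dist r y| < del -> ~~ in_band y.
  exists (Num.max (d - alpha - dist r z) (dist r z - (d + alpha))).
    by case: hA; case_minmax; lra.
  move=> y; rewrite /in_band ltr_norml negb_and -!ltNge.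
  by case: hA => h /andP[h1 h2]; apply/orP; move: h1 h2; case_minmax; lra.
have [eps he H] := near_edge_point hw hdel.
exists eps => // y hy hwy; apply: gap.
case: (H y hy hwy) => [->|[e [t [t' [ht ht' -> -> hlt]]]]]; first by rewrite subrr normr0.
have [t0 [_ _ _ Hp]] := exists_edge_profile e hr.
rewrite !Hp //; apply: le_lt_trans hlt; rewrite ler_norml.
have := edge_profile_lipschitz (len e) t0 (dist r (PV (src e))) (dist r (PV (dst e))) t t'.
have := edge_profile_lipschitz (len e) t0 (dist r (PV (src e))) (dist r (PV (dst e))) t' t.
by rewrite distrC => *; apply/andP; split; lra.
Qed.

Lemma band_chain_in_band x z : inG x -> in_band x -> band_chain x z -> inG z /\ in_band z.
Proof.
move=> hx hA; elim=> [//|y {}z _ _ [e [a [b [ha hb _ -> hs]]]]].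
split; first exact: inG_edge_point.
by apply: hs; apply/andP; case_minmax; lra.
Qed.

Lemma band_chain_open x : inG x -> in_band x ->
  gopen [set z | inG z /\ (band_chain x z \/ ~~ in_band z)].
Proof.
move=> hx hA z hz [_ [Hz|Hz]].
  have [_ hzA] := band_chain_in_band hx hA Hz.
  have [eps he H] := band_locally hz hzA.
  exists eps => // y hy hzy; split => //.
  case: (boolP (in_band y)) => hyA; last by right.
  by case: (H y hy hyA hzy) => [->|Hs]; left => //; exact: band_chainS Hz Hs.
have [eps he H] := out_band_locally hz Hz.
by exists eps => // y hy hzy; split => //; right; exact: H.
Qed.

Lemma band_unchain_open x :
  gopen [set z | inG z /\ (~ band_chain x z \/ ~~ in_band z)].
Proof.
move=> z hz [_ Hz]; case: (boolP (in_band z)) => hzA; last first.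
  have [eps he H] := out_band_locally hz hzA.
  by exists eps => // y hy hzy; split => //; right; exact: H.
have {Hz} Hz : ~ band_chain x z by case: Hz => // /negP.
have [eps he H] := band_locally hz hzA.
exists eps => // y hy hzy; split => //.
case: (boolP (in_band y)) => hyA; last by right.
left => Hy; case: (H y hy hyA hzy) => [E|Hs]; first by apply: Hz; rewrite -E.
exact/Hz/(band_chainS Hy)/band_step_sym.
Qed.

(* The points of [B] reachable from [x] and those not reachable separate [B],
   once the points outside the annulus are added to both sides to make them
   open. *)
Lemma component_band_chain B x : is_component (annulus r d alpha) B -> B x ->
  forall y, B y -> band_chain x y.
Proof.
move=> [BS _ Bconn _] Bx y By.
have inB z : B z -> inG z /\ in_band z := BS z.
have [hx hxA] := inB x Bx; have [_ hyA] := inB y By.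
have cover : B `<=` [set z | inG z /\ (band_chain x z \/ ~~ in_band z)] `|`
                   [set z | inG z /\ (~ band_chain x z \/ ~~ in_band z)].
  move=> z /inB[hz _].
  by case: (pselect (band_chain x z)) => H; [left|right]; split => //; left.
have disj : B `&` [set z | inG z /\ (band_chain x z \/ ~~ in_band z)] `&`
                  [set z | inG z /\ (~ band_chain x z \/ ~~ in_band z)] = set0.
  apply/seteqP; split => // q [[Bq [_ H1]] [_ H2]]; have [_ hqA] := inB q Bq.
  by case: H1 => H1; case: H2 => H2; rewrite ?hqA // in H1 H2.
case: (Bconn _ _ (band_chain_open hx hxA) (@band_unchain_open x) cover disj) => HB.
  by have [_ [//|]] := HB y By; rewrite hyA.
by have [_ [|]] := HB x Bx; [case; exact: band_chain0|rewrite hxA].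
Qed.

End Annulus.

End PathMetric.

Theorem lemma7 (R : realType) (G : mgraph R) (Gconn : graph_connected G)
  (r : gpoint G) (hr : inG r) (alpha d : R) (halpha : 0 < alpha) (hd : 0 < d)
  (B : set (gpoint G)) (hB : is_component (annulus r d alpha) B) :
  forall x y, B x -> B y ->
    dist x y <= 4 * (2 + (NE G (4 * alpha))%:R) * alpha.
Proof.
move=> x y Bx By; have [BS _ _ _] := hB; have [hx hxA] := BS x Bx.
apply: (band_link_dist Gconn hr hd halpha); apply: (band_chain_link hx hxA).
exact: (component_band_chain Gconn hr hB Bx By).
Qed.
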